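(* The map $R:[0,1]\to[0,1]$ is continuous at every point of $[0,1]\setminus(\mathscr D\setminus\{1\})$, and at every point of $\mathscr D\setminus\{1\}$ it is left-continuous but not continuous. Hence $R$ is a Borel function of Baire class $1$, i.e. a pointwise limit of continuous functions.
   Context: Define $\rho$ on binary words: for $b=b_1b_2\dots$, $\rho(b)$ is obtained by deleting every digit $b_n=0$ and replacing every $b_n=1$ by $0$ if $n$ is odd and by $1$ if $n$ is even. Let $\mathscr C$ be the set of infinite binary sequences with infinitely many $1$'s; for $x\in(0,1]$ let $\beta(x)\in\mathscr C$ be the unique binary expansion of $x$ with infinitely many $1$'s, i.e. $x=\sum_n\beta(x)_n2^{-n}$. Define $R:[0,1]\to[0,1]$ by $R(0)=2/3$ and, for $x\in(0,1]$, $R(x)=\sum_{n\ge1}c_n2^{-n}$ where $c=\rho(\beta(x))$ (an infinite binary sequence). $\mathscr D$ denotes the set of dyadic rationals in $[0,1]$. *)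

From Stdlib Require Import Reals Lra Lia ZArith ClassicalEpsilon.
From Coquelicot Require Import Coquelicot.
Open Scope R_scope.

(* Infinite binary words b = b_1 b_2 ... are represented as  w : nat -> bool
   with  w k  = the digit b_(k+1)  (0-based storage, 1-based positions). *)
Definition bit (d : bool) : R := if d then 1 else 0.

Definition word_value_is (w : nat -> bool) (x : R) : Prop :=
  is_series (fun k => bit (w k) / 2 ^ (S k)) x.

Definition word_value (w : nat -> bool) : R :=
  Series (fun k => bit (w k) / 2 ^ (S k)).

Definition inf_ones (w : nat -> bool) : Prop :=
  forall N, exists k, (N <= k)%nat /\ w k = true.

(* beta(x) : the (unique) binary expansion of x in (0,1] with infinitely many 1's *)
Definition beta (x : R) : nat -> bool :=
  epsilon (inhabits (fun _ => false))
          (fun w => inf_ones w /\ word_value_is w x).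

Fixpoint count_ones (w : nat -> bool) (n : nat) : nat :=
  match n with
  | O => O
  | S m => (count_ones w m + if w m then 1 else 0)%nat
  end.

Definition pos_one (w : nat -> bool) (k : nat) : nat :=
  epsilon (inhabits O) (fun n => w n = true /\ count_ones w n = k).

(* rho(b): delete the 0's, replace a 1 at (1-based) position n by 0 if n is odd
   and by 1 if n is even.  A 1 stored at index p sits at position p+1, which is
   even iff p is odd.  So the (k+1)-th digit of rho(b) is  Nat.odd (pos_one b k). *)
Definition rho (w : nat -> bool) : nat -> bool :=
  fun k => Nat.odd (pos_one w k).

Definition Rmap (x : R) : R :=
  if Req_EM_T x 0 then 2 / 3 else word_value (rho (beta x)).

Definition dyadic (x : R) : Prop :=
  exists (k : Z) (n : nat), x = IZR k / 2 ^ n.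

Definition in01 (x : R) : Prop := 0 <= x <= 1.

Definition cont_at01 (f : R -> R) (x : R) : Prop :=
  forall eps, 0 < eps -> exists delta, 0 < delta /\
    forall y, in01 y -> Rabs (y - x) < delta -> Rabs (f y - f x) < eps.

Definition left_cont_at01 (f : R -> R) (x : R) : Prop :=
  forall eps, 0 < eps -> exists delta, 0 < delta /\
    forall y, in01 y -> x - delta < y <= x -> Rabs (f y - f x) < eps.

Definition baire1_01 (f : R -> R) : Prop :=
  exists g : nat -> R -> R,
    (forall n x, in01 x -> cont_at01 (g n) x) /\
    (forall x, in01 x -> is_lim_seq (fun n => g n x) (f x)).

(* Let x > 0 have expansion beta(x) and let s_N be the value of its first
   N digits, so x lies in the dyadic interval I_N(x) = (s_N, s_N + 2^-N].  Every y
   in I_N(x) has an expansion sharing those N digits, hence rho(beta y) shares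
   with rho(beta x) as many digits as there are 1's among them; this number is
   unbounded in N, so R is almost constant on I_N(x).  The interval I_N(x) is a
   neighbourhood of x from the left, and from both sides unless x is its right
   end point, which is dyadic.  At a dyadic x < 1, the points x + 2^-m have
   expansions "prefix of x, zeros, then ones from position m on", whose images
   under rho end in 0101... or 1010... according to the parity of m; the values
   of R on these two families stay a fixed distance apart.  Finally the
   piecewise-linear interpolants of R on the grids 2^-n Z are continuous and
   converge to R at every dyadic point (exactly) and at every continuity point. *)
From Stdlib Require Import Reals Lra Lia ZArith ClassicalEpsilon Classical FunctionalExtensionality.
From Coquelicot Require Import Coquelicot.
Open Scope R_scope.

Definition step (n : nat) : R := / 2 ^ n.

Lemma step_pos n : 0 < step n.
Proof. unfold step. apply Rinv_0_lt_compat, pow_lt; lra. Qed.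

Lemma step_S n : step (S n) = step n / 2.
Proof. unfold step. simpl. field. apply pow_nonzero; lra. Qed.

Lemma step_0 : step 0 = 1.
Proof. unfold step; simpl; lra. Qed.

Lemma pow2_step n : 2 ^ n * step n = 1.
Proof. unfold step. field. apply pow_nonzero; lra. Qed.

Lemma step_antitone n m : (n <= m)%nat -> step m <= step n.
Proof.
  intros H. induction H as [|m _ IH]; [lra|].
  rewrite step_S. pose proof (step_pos m). lra.
Qed.

Lemma step_small eps M : 0 < eps -> exists n, (M <= n)%nat /\ step n < eps.
Proof.
  intros Heps. destruct (pow_lt_1_zero (/2)) with (y := eps) as [N HN];
    [rewrite Rabs_pos_eq; lra | exact Heps |].
  exists (M + N)%nat. split; [lia|].
  eapply Rle_lt_trans; [apply step_antitone with (n := N); lia|].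
  specialize (HN N (le_n N)). unfold step. rewrite <- pow_inv.
  rewrite Rabs_pos_eq in HN; [exact HN | apply pow_le; lra].
Qed.

Lemma bit_bounds b : 0 <= bit b <= 1.
Proof. destruct b; simpl; lra. Qed.

Fixpoint prefix_sum (w : nat -> bool) (n : nat) : R :=
  match n with O => 0 | S m => prefix_sum w m + bit (w m) * step (S m) end.

Fixpoint prefix_numer (w : nat -> bool) (n : nat) : nat :=
  match n with O => O | S m => (2 * prefix_numer w m + if w m then 1 else 0)%nat end.

Lemma prefix_sum_numer w n : prefix_sum w n = INR (prefix_numer w n) * step n.
Proof.
  induction n as [|n IH]; cbn [prefix_sum prefix_numer]; [simpl; lra|].
  rewrite IH, step_S, plus_INR, mult_INR. destruct (w n); simpl; lra.
Qed.

Lemma prefix_sum_nested w m n : (m <= n)%nat ->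
  prefix_sum w m <= prefix_sum w n /\ prefix_sum w n + step n <= prefix_sum w m + step m.
Proof.
  intros H. induction H as [|n _ IH]; [lra|].
  simpl. rewrite step_S. pose proof (step_pos n). pose proof (bit_bounds (w n)).
  assert (0 <= bit (w n) * (step n / 2) <= step n / 2) by nra. lra.
Qed.

Lemma prefix_sum_agree w v n : (forall i, (i < n)%nat -> w i = v i) ->
  prefix_sum w n = prefix_sum v n.
Proof.
  induction n as [|n IH]; intros H; [reflexivity|].
  simpl. rewrite IH by (intros; apply H; lia). rewrite H by lia. reflexivity.
Qed.

Lemma sum_f_prefix_sum w n :
  sum_f_R0 (fun k => bit (w k) / 2 ^ S k) n = prefix_sum w (S n).
Proof.
  induction n as [|n IH]; [simpl; unfold step, Rdiv; simpl; lra|].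
  rewrite tech5, IH. reflexivity.
Qed.

Lemma word_value_is_cv w x : word_value_is w x <-> Un_cv (prefix_sum w) x.
Proof.
  unfold word_value_is. rewrite is_series_Reals. unfold infinite_sum. split.
  - intros H eps Heps. destruct (H eps Heps) as [N HN]. exists (S N). intros [|n] Hn; [lia|].
    rewrite <- sum_f_prefix_sum. apply HN. lia.
  - intros H eps Heps. destruct (H eps Heps) as [N HN]. exists N. intros n Hn.
    rewrite sum_f_prefix_sum. apply HN. lia.
Qed.

Lemma cv_bounds u l a b N : Un_cv u l ->
  (forall j, (N <= j)%nat -> a <= u j <= b) -> a <= l <= b.
Proof.
  intros Hu Hab. split; apply Rnot_lt_le; intros Hl.
  - destruct (Hu (a - l)) as [M HM]; [lra|].
    specialize (HM (max N M) ltac:(lia)). specialize (Hab (max N M) ltac:(lia)).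
    unfold Rdist in HM. apply Rabs_def2 in HM. lra.
  - destruct (Hu (l - b)) as [M HM]; [lra|].
    specialize (HM (max N M) ltac:(lia)). specialize (Hab (max N M) ltac:(lia)).
    unfold Rdist in HM. apply Rabs_def2 in HM. lra.
Qed.

Lemma word_value_is_bounds w x n : word_value_is w x ->
  prefix_sum w n <= x <= prefix_sum w n + step n.
Proof.
  intros H. apply word_value_is_cv in H. apply (cv_bounds _ _ _ _ n H).
  intros j Hj. pose proof (prefix_sum_nested w n j Hj). pose proof (step_pos j). lra.
Qed.

(* The series defining word values always converges (its partial sums increase
   and stay below 1). *)
Lemma word_value_spec w : word_value_is w (word_value w).
Proof.
  assert (Hcv : exists l, word_value_is w l).
  { destruct (growing_cv (prefix_sum w)) as [l Hl].
    - intro n. apply (prefix_sum_nested w n (S n)). lia.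
    - exists 1. intros y [n ->]. pose proof (prefix_sum_nested w 0 n ltac:(lia)).
      pose proof (step_pos n). simpl in *. rewrite step_0 in *. lra.
    - exists l. apply word_value_is_cv. exact Hl. }
  destruct Hcv as [l Hl]. unfold word_value. rewrite (is_series_unique _ _ Hl). exact Hl.
Qed.

Lemma word_value_agree w v n : (forall i, (i < n)%nat -> w i = v i) ->
  Rabs (word_value w - word_value v) <= step n.
Proof.
  intros H. pose proof (prefix_sum_agree w v n H).
  pose proof (word_value_is_bounds _ _ n (word_value_spec w)).
  pose proof (word_value_is_bounds _ _ n (word_value_spec v)).
  apply Rabs_le. lra.
Qed.

Lemma count_ones_mono w n m : (n <= m)%nat -> (count_ones w n <= count_ones w m)%nat.
Proof. intros H. induction H as [|m _ IH]; simpl; lia. Qed.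

Lemma count_ones_agree w v N : (forall i, (i < N)%nat -> w i = v i) ->
  forall n, (n <= N)%nat -> count_ones w n = count_ones v n.
Proof.
  intros H n. induction n as [|n IH]; intros Hn; [reflexivity|].
  simpl. rewrite IH by lia. rewrite H by lia. reflexivity.
Qed.

Lemma count_ones_unbounded w k : inf_ones w -> exists N, (k <= count_ones w N)%nat.
Proof.
  intros Hw. induction k as [|k [N HN]]; [exists O; lia|].
  destruct (Hw N) as [i [Hi Hwi]]. exists (S i). simpl. rewrite Hwi.
  pose proof (count_ones_mono w N i Hi). lia.
Qed.

Lemma one_with_count w k N : (k < count_ones w N)%nat ->
  exists n, (n < N)%nat /\ w n = true /\ count_ones w n = k.
Proof.
  induction N as [|N IH]; intros H; simpl in H; [lia|].
  destruct (le_lt_dec (S k) (count_ones w N)) as [Hl|Hl].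
  - destruct (IH Hl) as [n [? ?]]. exists n. split; [lia|auto].
  - exists N. destruct (w N); [repeat split; lia | lia].
Qed.

Lemma one_with_count_unique w n n' : w n = true -> w n' = true ->
  count_ones w n = count_ones w n' -> n = n'.
Proof.
  intros Hn Hn' Hc.
  destruct (Nat.lt_trichotomy n n') as [Hl|[Hl|Hl]]; auto; exfalso.
  - pose proof (count_ones_mono w (S n) n' Hl). simpl in *. rewrite Hn in *. lia.
  - pose proof (count_ones_mono w (S n') n Hl). simpl in *. rewrite Hn' in *. lia.
Qed.

Lemma pos_one_spec w k : inf_ones w ->
  w (pos_one w k) = true /\ count_ones w (pos_one w k) = k.
Proof.
  intros Hw. unfold pos_one. apply epsilon_spec.
  destruct (count_ones_unbounded w (S k) Hw) as [N HN].
  destruct (one_with_count w k N HN) as [n [_ Hn]]. exists n. exact Hn.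
Qed.

Lemma pos_one_eq w k n : inf_ones w -> w n = true -> count_ones w n = k ->
  pos_one w k = n.
Proof.
  intros Hw Hn Hc. destruct (pos_one_spec w k Hw) as [H1 H2].
  apply one_with_count_unique with w; congruence.
Qed.

Lemma rho_agree w v N : inf_ones w -> inf_ones v ->
  (forall i, (i < N)%nat -> w i = v i) ->
  forall k, (k < count_ones w N)%nat -> rho w k = rho v k.
Proof.
  intros Hw Hv H k Hk. unfold rho.
  destruct (pos_one_spec w k Hw) as [H1 H2]. set (n := pos_one w k) in *.
  assert (Hn : (n < N)%nat).
  { destruct (le_lt_dec N n) as [Hl|Hl]; auto.
    pose proof (count_ones_mono w N n Hl). lia. }
  rewrite (pos_one_eq v k n Hv); [reflexivity| rewrite <- H; auto |].
  rewrite <- (count_ones_agree w v N H n) by lia. exact H2.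
Qed.

Definition expansion (w : nat -> bool) (x : R) : Prop := inf_ones w /\ word_value_is w x.

(* Since w has a 1 after every prefix, x lies in the half-open dyadic interval
   (s_n, s_n + 2^-n] of each prefix. *)
Lemma expansion_bounds w x n : expansion w x ->
  prefix_sum w n < x <= prefix_sum w n + step n.
Proof.
  intros [Hw Hx]. pose proof (word_value_is_bounds w x n Hx). split; [|lra].
  destruct (Hw n) as [k [Hk Hwk]].
  pose proof (word_value_is_bounds w x (S k) Hx) as Hb. simpl in Hb.
  rewrite Hwk in Hb. simpl bit in Hb.
  pose proof (prefix_sum_nested w n k Hk). pose proof (step_pos (S k)). lra.
Qed.

Lemma expansion_range w x : expansion w x -> 0 < x <= 1.
Proof.
  intros H. pose proof (expansion_bounds w x 0 H). simpl in *. rewrite step_0 in *. lra.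
Qed.

Lemma grid_interval_unique a b n y :
  INR a * step n < y <= INR a * step n + step n ->
  INR b * step n < y <= INR b * step n + step n -> a = b.
Proof.
  intros Ha Hb. pose proof (step_pos n).
  destruct (Nat.lt_trichotomy a b) as [Hl|[Hl|Hl]]; auto;
    apply le_INR in Hl; rewrite S_INR in Hl; nra.
Qed.

Lemma expansion_prefix w x v y n : expansion w x -> expansion v y ->
  prefix_sum w n < y <= prefix_sum w n + step n ->
  forall i, (i < n)%nat -> v i = w i.
Proof.
  intros Hw Hv Hy.
  assert (Hnum : forall m, (m <= n)%nat -> prefix_numer v m = prefix_numer w m).
  { intros m Hm. pose proof (prefix_sum_nested w m n Hm).
    pose proof (expansion_bounds v y m Hv). pose proof (step_pos n).
    rewrite !prefix_sum_numer in *. apply (grid_interval_unique _ _ m y); lra. }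
  intros i Hi. pose proof (Hnum i ltac:(lia)). pose proof (Hnum (S i) ltac:(lia)) as HS.
  simpl in HS. destruct (v i), (w i); auto; lia.
Qed.

Lemma expansion_unique w v x : expansion w x -> expansion v x -> v = w.
Proof.
  intros Hw Hv. apply functional_extensionality. intros i.
  apply (expansion_prefix w x v x (S i)); auto. apply expansion_bounds; auto.
Qed.

Fixpoint greedy_sum (x : R) (n : nat) : R :=
  match n with
  | O => 0
  | S m => if Rlt_dec (greedy_sum x m + step (S m)) x
           then greedy_sum x m + step (S m) else greedy_sum x m
  end.

Definition greedy_digit (x : R) (n : nat) : bool :=
  if Rlt_dec (greedy_sum x n + step (S n)) x then true else false.

Lemma prefix_sum_greedy x n : prefix_sum (greedy_digit x) n = greedy_sum x n.
Proof.
  induction n as [|n IH]; [reflexivity|]. simpl. rewrite IH. unfold greedy_digit.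
  destruct (Rlt_dec (greedy_sum x n + step (S n)) x); simpl; lra.
Qed.

Lemma greedy_sum_bounds x n : 0 < x <= 1 ->
  greedy_sum x n < x <= greedy_sum x n + step n.
Proof.
  intros Hx. induction n as [|n IH]; simpl; [rewrite step_0; lra|].
  rewrite step_S in *. destruct (Rlt_dec (greedy_sum x n + step n / 2) x); lra.
Qed.

Lemma greedy_expansion x : 0 < x <= 1 -> expansion (greedy_digit x) x.
Proof.
  intros Hx. split.
  - (* a tail of 0's would freeze the partial sums strictly below x *)
    intros N. apply NNPP. intros Hnone.
    assert (Hfrozen : forall k, (N <= k)%nat ->
              prefix_sum (greedy_digit x) k = prefix_sum (greedy_digit x) N).
    { intros k Hk. induction Hk as [|k Hk IH]; [reflexivity|]. simpl.
      destruct (greedy_digit x k) eqn:E; [exfalso; apply Hnone; exists k; auto|].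
      simpl. lra. }
    pose proof (greedy_sum_bounds x N Hx). rewrite <- prefix_sum_greedy in *.
    destruct (step_small (x - prefix_sum (greedy_digit x) N) N) as [k [Hk Hsk]]; [lra|].
    pose proof (greedy_sum_bounds x k Hx). rewrite <- prefix_sum_greedy, Hfrozen in * by lia.
    lra.
  - apply word_value_is_cv. intros eps Heps.
    destruct (step_small eps 0 Heps) as [N [_ HN]]. exists N. intros n Hn.
    pose proof (greedy_sum_bounds x n Hx). rewrite <- prefix_sum_greedy in *.
    pose proof (step_antitone N n Hn). unfold Rdist. rewrite Rabs_left1 by lra. lra.
Qed.

Lemma beta_expansion x : 0 < x <= 1 -> expansion (beta x) x.
Proof. intros Hx. unfold beta. apply epsilon_spec. exists (greedy_digit x). now apply greedy_expansion. Qed.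

Lemma beta_eq w x : expansion w x -> beta x = w.
Proof.
  intros H. apply (expansion_unique w (beta x) x H).
  apply beta_expansion. exact (expansion_range w x H).
Qed.

Lemma Rmap_nonzero x : x <> 0 -> Rmap x = word_value (rho (beta x)).
Proof. intros H. unfold Rmap. destruct (Req_EM_T x 0); [contradiction|reflexivity]. Qed.

(* The key estimate: R varies by less than eps on a dyadic interval
   (s_N, s_N + 2^-N] around x, N being chosen so that the first N digits of
   beta x contain enough 1's. *)
Lemma Rmap_local_oscillation x eps : 0 < x <= 1 -> 0 < eps -> exists N,
  forall y, prefix_sum (beta x) N < y <= prefix_sum (beta x) N + step N ->
  Rabs (Rmap y - Rmap x) < eps.
Proof.
  intros Hx Heps. destruct (step_small eps 0 Heps) as [c [_ Hc]].
  pose proof (beta_expansion x Hx) as Hbx.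
  destruct (count_ones_unbounded (beta x) c (proj1 Hbx)) as [N HN]. exists N.
  intros y Hy. pose proof (prefix_sum_nested (beta x) 0 N ltac:(lia)) as Hn.
  simpl in Hn. rewrite step_0 in Hn.
  assert (Hy1 : 0 < y <= 1) by lra. pose proof (beta_expansion y Hy1) as Hby.
  pose proof (expansion_prefix _ _ _ _ N Hbx Hby Hy) as Hpre.
  assert (Hrho : forall k, (k < c)%nat -> rho (beta x) k = rho (beta y) k).
  { intros k Hk. apply (rho_agree _ _ N (proj1 Hbx) (proj1 Hby)); [|lia].
    intros i Hi. symmetry. auto. }
  rewrite !Rmap_nonzero by lra. pose proof (word_value_agree _ _ c Hrho).
  rewrite Rabs_minus_sym. lra.
Qed.

Lemma dyadic_grid_point w N : dyadic (prefix_sum w N + step N).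
Proof.
  exists (Z.of_nat (prefix_numer w N) + 1)%Z, N. rewrite prefix_sum_numer.
  unfold step, Rdiv. rewrite plus_IZR, <- INR_IZR_INZ. ring.
Qed.

Lemma dyadic_0 : dyadic 0.
Proof. exists 0%Z, O. unfold Rdiv. simpl. ring. Qed.

Lemma dyadic_1 : dyadic 1.
Proof. exists 1%Z, O. unfold Rdiv. simpl. field. Qed.

(* At a non-dyadic x, or at x = 1, the interval (s_N, s_N + 2^-N] is a
   neighbourhood of x in [0,1]. *)
Lemma Rmap_continuous x : in01 x -> ~ (dyadic x /\ x <> 1) -> cont_at01 Rmap x.
Proof.
  intros Hx Hnd eps Heps. unfold in01 in Hx.
  assert (Hx0 : x <> 0) by (intros ->; apply Hnd; split; [apply dyadic_0 | lra]).
  destruct (Rmap_local_oscillation x eps ltac:(lra) Heps) as [N HN].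
  pose proof (expansion_bounds _ _ N (beta_expansion x ltac:(lra))) as Hb.
  set (s := prefix_sum (beta x) N) in *.
  assert (Hright : x = 1 \/ x < s + step N).
  { destruct (Req_dec x 1) as [H1|H1]; [now left|right].
    destruct Hb as [_ [Hlt|Heq]]; [exact Hlt|].
    exfalso. apply Hnd. split; [rewrite Heq; apply dyadic_grid_point | exact H1]. }
  destruct Hright as [H1|Hlt].
  - exists (x - s). split; [lra|]. intros y Hy Hyx. unfold in01 in Hy.
    apply HN. apply Rabs_def2 in Hyx. lra.
  - exists (Rmin (x - s) (s + step N - x)). split; [apply Rmin_pos; lra|].
    intros y _ Hyx. apply HN. apply Rabs_def2 in Hyx.
    pose proof (Rmin_l (x - s) (s + step N - x)).
    pose proof (Rmin_r (x - s) (s + step N - x)). lra.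
Qed.

(* Every interval (s_N, s_N + 2^-N] containing x is a left neighbourhood of x. *)
Lemma Rmap_left_continuous x : in01 x -> left_cont_at01 Rmap x.
Proof.
  intros Hx eps Heps. unfold in01 in Hx. destruct (Req_dec x 0) as [H0|H0].
  - exists 1. split; [lra|]. intros y Hy Hyx. unfold in01 in Hy.
    replace y with x by lra. rewrite Rminus_diag, Rabs_R0. exact Heps.
  - destruct (Rmap_local_oscillation x eps ltac:(lra) Heps) as [N HN].
    pose proof (expansion_bounds _ _ N (beta_expansion x ltac:(lra))) as Hb.
    exists (x - prefix_sum (beta x) N). split; [lra|]. intros y _ Hyx. apply HN. lra.
Qed.

Lemma word_value_is_ones_tail w m : (forall i, (m <= i)%nat -> w i = true) ->
  word_value_is w (prefix_sum w m + step m).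
Proof.
  intros H.
  assert (Hsum : forall n, (m <= n)%nat -> prefix_sum w n = prefix_sum w m + step m - step n).
  { intros n Hn. induction Hn as [|n Hn IH]; [ring|].
    simpl. rewrite IH, H by lia. rewrite step_S. simpl. field. }
  apply word_value_is_cv. intros eps Heps.
  destruct (step_small eps m Heps) as [N [HmN HN]]. exists N. intros n Hn.
  rewrite Hsum by lia. unfold Rdist. pose proof (step_pos n).
  pose proof (step_antitone N n Hn). rewrite Rabs_left1; lra.
Qed.

(* The first M digits of z, then 0's up to index m, then only 1's; its value is
   s_M(z) + 2^-m, approaching s_M(z) from the right as m grows. *)
Definition tail_word (z : nat -> bool) (M m : nat) (i : nat) : bool :=
  if Nat.ltb i M then z i else if Nat.ltb i m then false else true.

Lemma tail_word_inf_ones z M m : inf_ones (tail_word z M m).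
Proof.
  intros N. exists (max N (max m M)). split; [lia|]. unfold tail_word.
  destruct (Nat.ltb_spec (max N (max m M)) M); [lia|].
  destruct (Nat.ltb_spec (max N (max m M)) m); [lia|reflexivity].
Qed.

Lemma tail_word_prefix z M m : forall i, (i < M)%nat -> tail_word z M m i = z i.
Proof. intros i Hi. unfold tail_word. destruct (Nat.ltb_spec i M); [reflexivity|lia]. Qed.

Lemma tail_word_zero z M m : forall i, (M <= i < m)%nat -> tail_word z M m i = false.
Proof.
  intros i Hi. unfold tail_word.
  destruct (Nat.ltb_spec i M); [lia|]. destruct (Nat.ltb_spec i m); [reflexivity|lia].
Qed.

Lemma tail_word_one z M m : forall i, (M <= i)%nat -> (m <= i)%nat -> tail_word z M m i = true.
Proof.
  intros i HM Hm. unfold tail_word.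
  destruct (Nat.ltb_spec i M); [lia|]. destruct (Nat.ltb_spec i m); [lia|reflexivity].
Qed.

Lemma tail_word_expansion z M m : (M <= m)%nat ->
  expansion (tail_word z M m) (prefix_sum z M + step m).
Proof.
  intros Hm. split; [apply tail_word_inf_ones|].
  assert (Hsum : prefix_sum (tail_word z M m) m = prefix_sum z M).
  { assert (Hmid : forall n, (M <= n <= m)%nat -> prefix_sum (tail_word z M m) n = prefix_sum z M).
    { intros n [Hn Hnm]. induction Hn as [|n Hn IH].
      - apply prefix_sum_agree, tail_word_prefix.
      - simpl. rewrite IH, tail_word_zero by lia. simpl. ring. }
    apply Hmid. lia. }
  rewrite <- Hsum. apply word_value_is_ones_tail. intros i Hi. apply tail_word_one; lia.
Qed.

Lemma tail_word_rho z M m : (M <= m)%nat -> forall j,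
  rho (tail_word z M m) (count_ones z M + j) = Nat.odd (m + j).
Proof.
  intros Hm.
  assert (Hmid : forall n, (M <= n <= m)%nat -> count_ones (tail_word z M m) n = count_ones z M).
  { intros n [Hn Hnm]. induction Hn as [|n Hn IH].
    - apply (count_ones_agree _ _ M); [apply tail_word_prefix | lia].
    - simpl. rewrite IH, tail_word_zero by lia. lia. }
  assert (Hcount : forall j, count_ones (tail_word z M m) (m + j) = (count_ones z M + j)%nat).
  { induction j as [|j IH]; [rewrite Nat.add_0_r, Nat.add_0_r; apply Hmid; lia|].
    rewrite !Nat.add_succ_r. simpl. rewrite IH, tail_word_one by lia. lia. }
  intros j. unfold rho. rewrite (pos_one_eq _ _ (m + j)); [reflexivity | apply tail_word_inf_ones | |].
  - apply tail_word_one; lia.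
  - apply Hcount.
Qed.

Lemma word_value_gap u v c : (forall k, (k < c)%nat -> u k = v k) ->
  u c = false -> u (S (S c)) = false -> v c = true ->
  word_value v - word_value u >= step c / 8.
Proof.
  intros Hag Hu0 Hu2 Hv0.
  pose proof (prefix_sum_agree u v c Hag) as HP.
  pose proof (word_value_is_bounds _ _ (S (S (S c))) (word_value_spec u)) as Hu.
  pose proof (word_value_is_bounds _ _ (S c) (word_value_spec v)) as Hv.
  cbn [prefix_sum] in Hu, Hv. rewrite Hu0, Hu2 in Hu. rewrite Hv0 in Hv.
  pose proof (bit_bounds (u (S c))). repeat rewrite step_S in Hu. rewrite step_S in Hv.
  pose proof (step_pos c). simpl bit in Hu, Hv. nra.
Qed.

Lemma dyadic_prefix_sum x : in01 x -> dyadic x -> x <> 1 ->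
  exists z M, x = prefix_sum z M.
Proof.
  intros Hx [k [M Hk]] Hx1. unfold in01 in Hx.
  assert (Hx' : x = IZR k * step M) by (rewrite Hk; reflexivity).
  pose proof (step_pos M) as HsM. pose proof (pow2_step M) as H2.
  assert (Hk0 : (0 <= k)%Z) by (apply le_IZR; nra).
  assert (Hk1 : IZR k + 1 <= 2 ^ M).
  { assert (Hlt : IZR k < 2 ^ M) by nra.
    replace 2 with (IZR 2) in * by reflexivity. rewrite pow_IZR in *.
    apply lt_IZR in Hlt. rewrite <- plus_IZR. apply IZR_le. lia. }
  assert (HxM : 0 < x + step M <= 1) by nra.
  set (z := beta (x + step M)). exists z, M.
  pose proof (expansion_bounds _ _ M (beta_expansion _ HxM)) as Hb. fold z in Hb.
  rewrite prefix_sum_numer in *.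
  replace (prefix_numer z M) with (Z.to_nat k); [rewrite INR_IZR_INZ, Z2Nat.id; auto|].
  apply (grid_interval_unique _ _ M (x + step M)); [|exact Hb].
  rewrite INR_IZR_INZ, Z2Nat.id by exact Hk0. lra.
Qed.

Lemma Rmap_right_of_dyadic z M m : (M <= m)%nat ->
  Rmap (prefix_sum z M + step m) = word_value (rho (tail_word z M m)).
Proof.
  intros Hm. pose proof (tail_word_expansion z M m Hm) as He.
  rewrite Rmap_nonzero by (pose proof (expansion_range _ _ He); lra).
  rewrite (beta_eq _ _ He). reflexivity.
Qed.

Lemma odd_double_add K j : Nat.odd (2 * K + j) = Nat.odd j.
Proof. rewrite Nat.add_comm. apply Nat.odd_add_mul_2. Qed.

Lemma tail_word_rho_even z M K j : (M <= 2 * K)%nat ->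
  rho (tail_word z M (2 * K)) (count_ones z M + j) = Nat.odd j.
Proof. intros HK. rewrite tail_word_rho by exact HK. apply odd_double_add. Qed.

Lemma tail_word_rho_odd z M K j : (M <= 2 * K)%nat ->
  rho (tail_word z M (S (2 * K))) (count_ones z M + j) = negb (Nat.odd j).
Proof.
  intros HK. rewrite tail_word_rho by lia.
  replace (S (2 * K) + j)%nat with (2 * K + S j)%nat by lia.
  rewrite odd_double_add, Nat.odd_succ, <- Nat.negb_odd. reflexivity.
Qed.

(* At a dyadic x < 1, the values of R at x + 2^-2K and x + 2^-(2K+1) stay a fixed
   distance apart, so R is not continuous at x. *)
Lemma Rmap_discontinuous x : in01 x -> dyadic x -> x <> 1 -> ~ cont_at01 Rmap x.
Proof.
  intros Hx Hd Hx1 Hc.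
  destruct (dyadic_prefix_sum x Hx Hd Hx1) as [z [M ->]].
  set (c := count_ones z M).
  destruct (Hc (step c / 16)) as [d [Hd0 Hnear]]; [pose proof (step_pos c); lra|].
  destruct (step_small d M Hd0) as [K [HK HKd]].
  assert (Hclose : forall m, (K <= m)%nat ->
            Rabs (word_value (rho (tail_word z M m)) - Rmap (prefix_sum z M)) < step c / 16).
  { intros m Hm. rewrite <- Rmap_right_of_dyadic by lia.
    pose proof (step_pos m). pose proof (step_antitone K m Hm).
    pose proof (step_antitone M m ltac:(lia)).
    pose proof (prefix_sum_nested z 0 M ltac:(lia)) as H01. simpl in H01. rewrite step_0 in H01.
    apply Hnear; [unfold in01; lra|].
    rewrite Rabs_pos_eq; lra. }
  assert (Hgap : word_value (rho (tail_word z M (S (2 * K))))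
                 - word_value (rho (tail_word z M (2 * K))) >= step c / 8).
  { apply word_value_gap.
    - intros k Hk. apply (rho_agree _ _ M); try apply tail_word_inf_ones.
      + intros i Hi. rewrite !tail_word_prefix by exact Hi. reflexivity.
      + rewrite (count_ones_agree _ z M (tail_word_prefix z M _)) by lia. exact Hk.
    - rewrite <- (Nat.add_0_r c). unfold c. now rewrite tail_word_rho_even by lia.
    - replace (S (S c)) with (c + 2)%nat by lia. unfold c. now rewrite tail_word_rho_even by lia.
    - rewrite <- (Nat.add_0_r c). unfold c. now rewrite tail_word_rho_odd by lia. }
  pose proof (Hclose (2 * K)%nat ltac:(lia)) as H1.
  pose proof (Hclose (S (2 * K)) ltac:(lia)) as H2.
  apply Rabs_def2 in H1. apply Rabs_def2 in H2. lra.
Qed.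

Definition tent (t : R) : R := Rmax 0 (1 - Rabs t).

Lemma tent_lipschitz a b : Rabs (tent a - tent b) <= Rabs (a - b).
Proof.
  unfold tent, Rmax. repeat destruct Rle_dec; unfold Rabs in *; repeat destruct Rcase_abs; lra.
Qed.

Lemma tent_outside t : t <= -1 \/ 1 <= t -> tent t = 0.
Proof.
  intros H. unfold tent, Rmax. destruct Rle_dec; auto.
  unfold Rabs in *. destruct Rcase_abs; lra.
Qed.

Lemma tent_nonneg_side t : 0 <= t <= 1 -> tent t = 1 - t.
Proof. intros H. unfold tent, Rmax. rewrite Rabs_pos_eq by lra. destruct Rle_dec; lra. Qed.

Lemma tent_nonpos_side t : -1 <= t <= 0 -> tent t = 1 + t.
Proof. intros H. unfold tent, Rmax. rewrite Rabs_left1 by lra. destruct Rle_dec; lra. Qed.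

(* The n-th interpolant: the piecewise-linear function through the points
   (k 2^-n, R(k 2^-n)), 0 <= k <= 2^n. *)
Definition interp (n : nat) (x : R) : R :=
  sum_f_R0 (fun k => Rmap (INR k * step n) * tent (2 ^ n * x - INR k)) (Nat.pow 2 n).

Lemma INR_pow2 n : INR (Nat.pow 2 n) = 2 ^ n.
Proof. rewrite pow_INR. simpl. replace (1 + 1) with 2 by ring. reflexivity. Qed.

Lemma sum_f_R0_lipschitz (f : nat -> R -> R) (L : nat -> R) x y N :
  (forall k, Rabs (f k x - f k y) <= L k * Rabs (x - y)) ->
  Rabs (sum_f_R0 (fun k => f k x) N - sum_f_R0 (fun k => f k y) N)
    <= sum_f_R0 L N * Rabs (x - y).
Proof.
  intros H. induction N as [|N IH]; simpl; [apply H|].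
  replace (sum_f_R0 (fun k => f k x) N + f (S N) x - (sum_f_R0 (fun k => f k y) N + f (S N) y))
    with ((sum_f_R0 (fun k => f k x) N - sum_f_R0 (fun k => f k y) N) + (f (S N) x - f (S N) y))
    by ring.
  eapply Rle_trans; [apply Rabs_triang|]. specialize (H (S N)). lra.
Qed.

Lemma interp_continuous n x : cont_at01 (interp n) x.
Proof.
  intros eps Heps.
  set (L := fun k : nat => Rabs (Rmap (INR k * step n)) * 2 ^ n).
  assert (HL : 0 <= sum_f_R0 L (Nat.pow 2 n)).
  { apply cond_pos_sum. intros k. apply Rmult_le_pos; [apply Rabs_pos | apply pow_le; lra]. }
  exists (eps / (sum_f_R0 L (Nat.pow 2 n) + 1)). split; [apply Rdiv_lt_0_compat; lra|].
  intros y _ Hy. unfold interp.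
  eapply Rle_lt_trans.
  - apply (sum_f_R0_lipschitz (fun k z => Rmap (INR k * step n) * tent (2 ^ n * z - INR k)) L).
    intros k. unfold L. rewrite <- Rmult_minus_distr_l, Rabs_mult, Rmult_assoc.
    apply Rmult_le_compat_l; [apply Rabs_pos|].
    eapply Rle_trans; [apply tent_lipschitz|].
    replace (2 ^ n * y - INR k - (2 ^ n * x - INR k)) with (2 ^ n * (y - x)) by ring.
    rewrite Rabs_mult, (Rabs_pos_eq (2 ^ n)) by (apply pow_le; lra). lra.
  - assert (Hd : eps / (sum_f_R0 L (Nat.pow 2 n) + 1) * (sum_f_R0 L (Nat.pow 2 n) + 1) = eps)
      by (field; lra).
    pose proof (Rabs_pos (y - x)). nra.
Qed.

Lemma sum_f_R0_two_terms (f : nat -> R) j N : (S j <= N)%nat ->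
  (forall k, k <> j -> k <> S j -> f k = 0) -> sum_f_R0 f N = f j + f (S j).
Proof.
  intros HN Hf.
  assert (Hpartial : forall m, sum_f_R0 f m =
            (if (j <=? m)%nat then f j else 0) + (if (S j <=? m)%nat then f (S j) else 0)).
  { induction m as [|m IH]; simpl sum_f_R0.
    - destruct j as [|j]; simpl; [ring|]. rewrite Hf by lia. ring.
    - rewrite IH.
      destruct (Nat.leb_spec j m), (Nat.leb_spec (S j) m),
               (Nat.leb_spec j (S m)), (Nat.leb_spec (S j) (S m)); try lia;
      try (rewrite (Hf (S m)) by lia; ring).
      + replace m with j by lia. ring.
      + replace j with (S m) by lia. ring. }
  rewrite Hpartial. destruct (Nat.leb_spec j N), (Nat.leb_spec (S j) N); try lia. reflexivity.
Qed.

Lemma interp_affine n x j th : 0 <= th <= 1 -> (S j <= Nat.pow 2 n)%nat ->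
  2 ^ n * x = INR j + th ->
  interp n x = (1 - th) * Rmap (INR j * step n) + th * Rmap (INR (S j) * step n).
Proof.
  intros Hth Hj Hx. unfold interp. rewrite Hx.
  rewrite (sum_f_R0_two_terms _ j); [|exact Hj|].
  - replace (INR j + th - INR j) with th by ring.
    replace (INR j + th - INR (S j)) with (th - 1) by (rewrite S_INR; ring).
    rewrite tent_nonneg_side, tent_nonpos_side by lra. ring.
  - intros k Hkj HkSj. rewrite tent_outside; [ring|].
    destruct (Nat.lt_trichotomy k j) as [Hk|[Hk|Hk]]; [right|lia|left].
    + apply le_INR in Hk. rewrite S_INR in Hk. lra.
    + assert (Hk2 : (S (S j) <= k)%nat) by lia. apply le_INR in Hk2.
      rewrite !S_INR in Hk2. lra.
Qed.

Lemma interp_grid_point n k : (k <= Nat.pow 2 n)%nat ->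
  interp n (INR k * step n) = Rmap (INR k * step n).
Proof.
  intros Hk. pose proof (pow2_step n) as H2.
  assert (Hscale : 2 ^ n * (INR k * step n) = INR k)
    by (transitivity (INR k * (2 ^ n * step n)); [ring | rewrite H2; ring]).
  destruct (Nat.lt_ge_cases k (Nat.pow 2 n)) as [Hlt|Hge].
  - rewrite (interp_affine n _ k 0); [ring | lra | exact Hlt | rewrite Hscale; ring].
  - assert (Hk' : S (k - 1) = k).
    { pose proof (Nat.pow_nonzero 2 n ltac:(lia)). lia. }
    rewrite (interp_affine n _ (k - 1) 1); rewrite ?Hk'; [ring | lra | exact Hk |].
    rewrite Hscale, <- Hk' at 1. rewrite S_INR. ring.
Qed.

Lemma dyadic_on_grids x : 0 <= x -> dyadic x ->
  exists M, forall n, (M <= n)%nat -> exists k, x = INR k * step n.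
Proof.
  intros Hx [k [M Hk]]. exists M. intros n Hn.
  assert (Hk0 : (0 <= k)%Z).
  { apply le_IZR. rewrite Hk in Hx. pose proof (pow_lt 2 M ltac:(lra)).
    apply Rmult_le_reg_r with (/ 2 ^ M); [apply Rinv_0_lt_compat; lra|]. lra. }
  exists (Z.to_nat k * Nat.pow 2 (n - M))%nat.
  rewrite mult_INR, INR_pow2, INR_IZR_INZ, Z2Nat.id by exact Hk0. rewrite Hk.
  unfold step. replace n with (M + (n - M))%nat at 2 by lia. rewrite pow_add.
  field. split; apply pow_nonzero; lra.
Qed.

Lemma grid_index_bound n k : INR k * step n <= 1 -> (k <= Nat.pow 2 n)%nat.
Proof.
  intros H. apply INR_le. rewrite INR_pow2. pose proof (pow_lt 2 n ltac:(lra)).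
  assert (Hk : INR k = 2 ^ n * (INR k * step n)).
  { transitivity (INR k * (2 ^ n * step n)); [rewrite pow2_step | ]; ring. }
  rewrite Hk. nra.
Qed.

Lemma interp_near_grid n x : 0 <= x < 1 -> exists a b th, 0 <= th <= 1 /\
  interp n x = (1 - th) * Rmap a + th * Rmap b /\
  in01 a /\ in01 b /\ Rabs (a - x) <= step n /\ Rabs (b - x) <= step n.
Proof.
  intros Hx. pose proof (pow_lt 2 n ltac:(lra)) as Hp. pose proof (pow2_step n) as H2.
  pose proof (step_pos n) as Hs.
  destruct (archimed (2 ^ n * x)) as [Hup1 Hup2]. set (u := up (2 ^ n * x)) in *.
  assert (Hu0 : (0 < u)%Z) by (apply lt_IZR; nra).
  assert (Hun : (u <= Z.of_nat (Nat.pow 2 n))%Z).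
  { apply Zlt_succ_le, lt_IZR. rewrite succ_IZR, <- INR_IZR_INZ, INR_pow2. nra. }
  set (j := Z.to_nat (u - 1)).
  assert (Hj : INR j = IZR u - 1) by (unfold j; rewrite INR_IZR_INZ, Z2Nat.id by lia;
                                      rewrite minus_IZR; reflexivity).
  set (th := 2 ^ n * x - INR j).
  assert (Hjn : (S j <= Nat.pow 2 n)%nat) by (unfold j; lia).
  assert (Hth : 0 <= th <= 1) by (unfold th; lra).
  exists (INR j * step n), (INR (S j) * step n), th.
  assert (Hxj : x = (INR j + th) * step n).
  { unfold th. transitivity (x * (2 ^ n * step n)); [rewrite H2|]; ring. }
  assert (HSj : INR (S j) * step n <= 1).
  { apply le_INR in Hjn. rewrite INR_pow2 in Hjn. rewrite <- H2. nra. }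
  split; [exact Hth|]. split; [apply interp_affine; [exact Hth | exact Hjn | unfold th; ring]|].
  pose proof (pos_INR j). rewrite S_INR in *. repeat split; try nra.
  - rewrite Hxj, Rabs_left1; nra.
  - rewrite Hxj, Rabs_pos_eq; nra.
Qed.

Lemma average_close a b c th eps : 0 <= th <= 1 ->
  Rabs (a - c) < eps -> Rabs (b - c) < eps -> Rabs ((1 - th) * a + th * b - c) < eps.
Proof.
  intros Hth Ha Hb.
  replace ((1 - th) * a + th * b - c) with ((1 - th) * (a - c) + th * (b - c)) by ring.
  eapply Rle_lt_trans; [apply Rabs_triang|].
  rewrite !Rabs_mult, (Rabs_pos_eq (1 - th)), (Rabs_pos_eq th) by lra.
  set (m := Rmax (Rabs (a - c)) (Rabs (b - c))).
  assert (Hm : m < eps) by (apply Rmax_lub_lt; assumption).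
  pose proof (Rmult_le_compat_l (1 - th) _ m ltac:(lra) (Rmax_l (Rabs (a - c)) (Rabs (b - c)))).
  pose proof (Rmult_le_compat_l th _ m ltac:(lra) (Rmax_r (Rabs (a - c)) (Rabs (b - c)))).
  lra.
Qed.

(* The interpolants converge to R at every point of [0,1]: exactly from some
   rank on at dyadic points, and by continuity of R elsewhere. *)
Lemma interp_converges x : in01 x -> is_lim_seq (fun n => interp n x) (Rmap x).
Proof.
  intros Hx. apply is_lim_seq_Reals. intros eps Heps. unfold in01 in Hx.
  destruct (classic (dyadic x)) as [Hd|Hnd].
  - destruct (dyadic_on_grids x (proj1 Hx) Hd) as [M HM]. exists M. intros n Hn.
    destruct (HM n Hn) as [k ->].
    rewrite interp_grid_point by (apply grid_index_bound; lra).
    unfold Rdist. rewrite Rminus_diag, Rabs_R0. exact Heps.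
  - assert (Hx1 : x < 1) by (destruct (Req_dec x 1) as [->|]; [destruct Hnd; apply dyadic_1 | lra]).
    destruct (Rmap_continuous x ltac:(unfold in01; lra) ltac:(tauto) eps Heps) as [d [Hd Hnear]].
    destruct (step_small d 0 Hd) as [N [_ HN]]. exists N. intros n Hn.
    destruct (interp_near_grid n x ltac:(lra)) as [a [b [th [Hth [-> [Ha [Hb [Hax Hbx]]]]]]]].
    pose proof (step_antitone N n Hn).
    unfold Rdist. apply average_close; [exact Hth | apply Hnear | apply Hnear]; auto; lra.
Qed.

Theorem proposition3p1 :
  (forall x, in01 x -> ~ (dyadic x /\ x <> 1) -> cont_at01 Rmap x) /\
  (forall x, in01 x -> dyadic x -> x <> 1 ->
     left_cont_at01 Rmap x /\ ~ cont_at01 Rmap x) /\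
  baire1_01 Rmap.
Proof.
  split; [exact Rmap_continuous|].
  split.
  - intros x Hx Hd Hx1. split; [apply Rmap_left_continuous | apply Rmap_discontinuous]; assumption.
  - exists interp. split; [intros n x _; apply interp_continuous | exact interp_converges].
Qed.
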